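(* Let $L\ge 2$ and let $M_1,\dots,M_L$ be pairwise distinct positive integers. Let $N$ be an integer with $0\le N<\operatorname{lcm}(M_1,\dots,M_L)$, and for $1\le i\le L$ let $r_i\in\{0,\dots,M_i-1\}$ be the remainder of $N$ modulo $M_i$ and $n_i=(N-r_i)/M_i$. Let $\tilde r_1,\dots,\tilde r_L$ be integers with $0\le\tilde r_i\le M_i-1$ and $|\tilde r_i-r_i|\le\tau$ for all $i$, where $$\tau<\max_{1\le i\le L}\ \min_{1\le j\le L,\ j\ne i}\frac{\gcd(M_i,M_j)}{4}.$$ Let $k$ be an index attaining this maximum, i.e. $\min_{j\ne k}\gcd(M_k,M_j)=\max_i\min_{j\ne i}\gcd(M_i,M_j)$. Then the single-stage algorithm (described in the context) run on the moduli $M_1,\dots,M_L$ with reference index $k$ and inputs $\tilde r_1,\dots,\tilde r_L$ outputs $\hat n_i=n_i$ for all $1\le i\le L$.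
   Context: For $x\in\mathbb R$, $[x]$ denotes the unique integer with $-1/2\le x-[x]<1/2$. Single-stage algorithm: let $P_1,\dots,P_m$ ($m\ge2$) be pairwise distinct positive integers, $k\in\{1,\dots,m\}$ a reference index, and $x_1,\dots,x_m$ integers. For each $i\ne k$ put $m_{ki}=\gcd(P_k,P_i)$, $\Gamma_{ki}=P_k/m_{ki}$, $\Gamma_{ik}=P_i/m_{ki}$, $\hat q_{ik}=[(x_i-x_k)/m_{ki}]$; let $\bar\Gamma_{ki}$ be a multiplicative inverse of $\Gamma_{ki}$ modulo $\Gamma_{ik}$, and let $\hat\xi_{ik}\in\{0,\dots,\Gamma_{ik}-1\}$ with $\hat\xi_{ik}\equiv\hat q_{ik}\bar\Gamma_{ki}\pmod{\Gamma_{ik}}$. Let $\hat n_k$ be the least nonnegative integer $y$ with $y\equiv\hat\xi_{ik}\pmod{\Gamma_{ik}}$ for all $i\ne k$ (if no such $y$ exists the algorithm fails). For $i\ne k$ set $\hat n_i=(\hat n_k\Gamma_{ki}-\hat q_{ik})/\Gamma_{ik}$. Outputs: $\hat n_1,\dots,\hat n_m$ and the estimate $[\frac1m\sum_{i=1}^m(\hat n_iP_i+x_i)]$. *)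

(* integers Z, reals R. Indices are 0-based: 0 .. m-1. *)
From Stdlib Require Import ZArith Reals List.
Import ListNotations.

(* [x]: the unique integer with -1/2 <= x - [x] < 1/2, i.e. floor(x + 1/2).
   Stdlib's [up y] is the unique integer with y < up y <= y + 1,
   so floor y = up y - 1. *)
Definition round (x : R) : Z := (up (x + / 2) - 1)%Z.

Open Scope Z_scope.

(* Quantities of the single-stage algorithm, moduli P, inputs x, reference k *)
Definition mki (P : nat -> Z) (k i : nat) : Z := Z.gcd (P k) (P i).
Definition Gki (P : nat -> Z) (k i : nat) : Z := P k / mki P k i.
Definition Gik (P : nat -> Z) (k i : nat) : Z := P i / mki P k i.
Definition qhat (P x : nat -> Z) (k i : nat) : Z :=
  round (IZR (x i - x k) / IZR (mki P k i))%R.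

Definition is_inverse_family (P : nat -> Z) (m k : nat) (Gbar : nat -> Z) : Prop :=
  forall i, (i < m)%nat -> i <> k ->
    (Gki P k i * Gbar i) mod Gik P k i = 1 mod Gik P k i.

Definition xihat (P x : nat -> Z) (k : nat) (Gbar : nat -> Z) (i : nat) : Z :=
  (qhat P x k i * Gbar i) mod Gik P k i.

Definition crt_sol (P x : nat -> Z) (m k : nat) (Gbar : nat -> Z) (y : Z) : Prop :=
  0 <= y /\ forall i, (i < m)%nat -> i <> k ->
    y mod Gik P k i = xihat P x k Gbar i mod Gik P k i.

(* y is the least such solution, i.e. y = n_hat_k *)
Definition is_nk_hat (P x : nat -> Z) (m k : nat) (Gbar : nat -> Z) (y : Z) : Prop :=
  crt_sol P x m k Gbar y /\ forall y', crt_sol P x m k Gbar y' -> y <= y'.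

Definition nhat (P x : nat -> Z) (k : nat) (y : Z) (i : nat) : Z :=
  if Nat.eqb i k then y
  else (y * Gki P k i - qhat P x k i) / Gik P k i.

Fixpoint lcm_upto (M : nat -> Z) (L : nat) : Z :=
  match L with
  | O => 1
  | S n => Z.lcm (lcm_upto M n) (M n)
  end.

(* min / max of a (nonempty) list; the default 0 for [] is never used *)
Definition list_min (l : list Z) : Z :=
  match l with [] => 0 | a :: t => fold_left Z.min t a end.
Definition list_max (l : list Z) : Z :=
  match l with [] => 0 | a :: t => fold_left Z.max t a end.

Definition mingcd (M : nat -> Z) (L i : nat) : Z :=
  list_min (map (fun j => Z.gcd (M i) (M j))
                (filter (fun j => negb (Nat.eqb j i)) (seq 0 L))).

Definition maxmingcd (M : nat -> Z) (L : nat) : Z :=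
  list_max (map (mingcd M L) (seq 0 L)).

From Stdlib Require Import ZArith Reals List Lia Lra Psatz.

(* Writing [N = n_k M_k + r_k = n_i M_i + r_i] and [g = gcd(M_k, M_i)], the
   difference of the inputs is [g (n_k Γ_ki - n_i Γ_ik)] plus an error of size at
   most [2 τ < g / 2], so rounding recovers [q_ik = n_k Γ_ki - n_i Γ_ik] exactly.
   Hence [n_k] solves every congruence [y ≡ q_ik Γ̄_ki (mod Γ_ik)].  A smaller
   nonnegative solution [y] would make [(n_k - y) M_k] a positive common multiple
   of all the [M_j] not exceeding [N < lcm(M_1, ..., M_L)], which is impossible;
   so [n̂_k = n_k], and then [n̂_i = (n_k Γ_ki - q_ik) / Γ_ik = n_i]. *)

Open Scope Z_scope.

Lemma fold_left_min_le (t : list Z) (a : Z) :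
  fold_left Z.min t a <= a /\ forall x, In x t -> fold_left Z.min t a <= x.
Proof.
  revert a; induction t as [|b t IH]; intros a; simpl.
  - split; [lia | tauto].
  - destruct (IH (Z.min a b)) as [Ha Ht]. split; [lia |].
    intros x [<- | Hx]; [lia | auto].
Qed.

Lemma list_min_le (l : list Z) (x : Z) : In x l -> list_min l <= x.
Proof.
  destruct l as [|a t]; simpl; [tauto |].
  destruct (fold_left_min_le t a) as [Ha Ht]. intros [<- | Hx]; auto.
Qed.

Lemma mingcd_le_gcd (M : nat -> Z) (L k i : nat) :
  (i < L)%nat -> i <> k -> mingcd M L k <= Z.gcd (M k) (M i).
Proof.
  intros Hi Hik. apply list_min_le, (in_map (fun j => Z.gcd (M k) (M j))).
  apply filter_In. split; [apply in_seq; lia |].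
  destruct (Nat.eqb_spec i k); simpl; congruence.
Qed.

Lemma lcm_upto_least (M : nat -> Z) (X : Z) (L : nat) :
  (forall j, (j < L)%nat -> (M j | X)) -> (lcm_upto M L | X).
Proof.
  induction L as [|L IH]; intros H; simpl.
  - apply Z.divide_1_l.
  - apply Z.lcm_least; auto.
Qed.

Lemma divide_sub_of_mod_eq (a b n : Z) : a mod n = b mod n -> (n | a - b).
Proof.
  intros H. exists (a / n - b / n).
  rewrite (Z_div_mod_eq_full a n) at 1. rewrite (Z_div_mod_eq_full b n) at 1.
  rewrite H. ring.
Qed.

Lemma mod_eq_of_divide_sub (a b n : Z) : (n | a - b) -> a mod n = b mod n.
Proof.
  intros [t Ht]. replace a with (b + t * n) by lia.
  destruct (Z.eq_dec n 0) as [-> | Hn].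
  - now rewrite Z.mul_0_r, Z.add_0_r.
  - now apply Z.mod_add.
Qed.

Lemma div_sub_mod (a n : Z) : 0 < n -> (a - a mod n) / n = a / n.
Proof.
  intros Hn. rewrite Z.mod_eq by lia.
  replace (a - (a - n * (a / n))) with (a / n * n) by ring.
  apply Z.div_mul; lia.
Qed.

Lemma gcd_pos_l (a b : Z) : 0 < a -> 0 < Z.gcd a b.
Proof.
  intros Ha. pose proof (Z.gcd_nonneg a b).
  destruct (Z.eq_dec (Z.gcd a b) 0) as [H0 |]; [| lia].
  apply Z.gcd_eq_0_l in H0. lia.
Qed.

Lemma round_IZR_add (q : Z) (e : R) :
  (- (1 / 2) <= e < 1 / 2)%R -> round (IZR q + e) = q.
Proof.
  intros He. unfold round.
  enough (Hup : q + 1 = up (IZR q + e + / 2)) by lia.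
  apply tech_up; rewrite plus_IZR; simpl; lra.
Qed.

Lemma round_div_near (m q e : Z) :
  0 < m -> (2 * Rabs (IZR e) < IZR m)%R -> round (IZR (m * q + e) / IZR m) = q.
Proof.
  intros Hm He. apply IZR_lt in Hm.
  replace (IZR (m * q + e) / IZR m)%R with (IZR q + IZR e / IZR m)%R
    by (rewrite plus_IZR, mult_IZR; field; lra).
  apply round_IZR_add.
  assert (He' : (- IZR m < 2 * IZR e < IZR m)%R)
    by (pose proof (Rle_abs (IZR e)); pose proof (Rle_abs (- IZR e));
        rewrite Rabs_Ropp in *; lra).
  set (v := (IZR e / IZR m)%R).
  replace (IZR e) with (v * IZR m)%R in He' by (unfold v; field; lra).
  split; nra.
Qed.

Section SingleStage.

Variables (L : nat) (M : nat -> Z) (N : Z) (rt : nat -> Z) (tau : R) (k : nat)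
  (Gbar : nat -> Z).

Hypothesis M_pos : forall i, (i < L)%nat -> 0 < M i.
Hypothesis N_range : 0 <= N < lcm_upto M L.
Hypothesis rt_err : forall i, (i < L)%nat -> (Rabs (IZR (rt i - N mod M i)) <= tau)%R.
Hypothesis k_lt : (k < L)%nat.
Hypothesis tau_lt_mingcd : (tau < IZR (mingcd M L k) / 4)%R.
Hypothesis Gbar_inv : is_inverse_family M L k Gbar.

Lemma moduli_factor i : (i < L)%nat ->
  0 < mki M k i /\ 0 < Gik M k i /\
  M k = mki M k i * Gki M k i /\ M i = mki M k i * Gik M k i.
Proof.
  intros Hi. pose proof (M_pos k k_lt). pose proof (M_pos i Hi).
  assert (Hg : 0 < mki M k i) by now apply gcd_pos_l.
  assert (HMk : M k = mki M k i * Gki M k i)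
    by (apply Znumtheory.Zdivide_Zdiv_eq; [| apply Z.gcd_divide_l]; lia).
  assert (HMi : M i = mki M k i * Gik M k i)
    by (apply Znumtheory.Zdivide_Zdiv_eq; [| apply Z.gcd_divide_r]; lia).
  repeat split; auto; nia.
Qed.

Lemma qhat_exact i : (i < L)%nat -> i <> k ->
  qhat M rt k i = N / M k * Gki M k i - N / M i * Gik M k i.
Proof.
  intros Hi Hik. destruct (moduli_factor i Hi) as (Hg & _ & HMk & HMi).
  set (ek := rt k - N mod M k) in *. set (ei := rt i - N mod M i) in *.
  assert (Hdiff : rt i - rt k =
    mki M k i * (N / M k * Gki M k i - N / M i * Gik M k i) + (ei - ek)).
  { pose proof (Z_div_mod_eq_full N (M i)). pose proof (Z_div_mod_eq_full N (M k)).
    set (nk := N / M k) in *. set (ni := N / M i) in *.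
    assert (mki M k i * (nk * Gki M k i - ni * Gik M k i) = M k * nk - M i * ni)
      by (rewrite HMk, HMi; ring).
    unfold ei, ek. lia. }
  unfold qhat. rewrite Hdiff. apply round_div_near; auto.
  assert (Hg' : (4 * tau < IZR (mki M k i))%R).
  { pose proof (IZR_le _ _ (mingcd_le_gcd M L k i Hi Hik)). unfold mki. lra. }
  pose proof (Rabs_triang (IZR ei) (- IZR ek)) as Htri. rewrite Rabs_Ropp in Htri.
  assert (Hei : (Rabs (IZR ei) <= tau)%R) by apply (rt_err i Hi).
  assert (Hek : (Rabs (IZR ek) <= tau)%R) by apply (rt_err k k_lt).
  rewrite minus_IZR; unfold Rminus. lra.
Qed.

Lemma quotient_crt_sol : crt_sol M rt L k Gbar (N / M k).
Proof.
  split; [apply Z.div_pos; [lia | apply M_pos, k_lt] |].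
  intros i Hi Hik. destruct (moduli_factor i Hi) as (_ & HB & _).
  unfold xihat. rewrite Z.mod_mod by lia.
  apply mod_eq_of_divide_sub. rewrite qhat_exact by auto.
  destruct (divide_sub_of_mod_eq _ _ _ (Gbar_inv i Hi Hik)) as [t Ht].
  exists (N / M i * Gbar i - N / M k * t).
  replace ((N / M i * Gbar i - N / M k * t) * Gik M k i)
    with (N / M i * Gbar i * Gik M k i - N / M k * (t * Gik M k i)) by ring.
  rewrite <- Ht. ring.
Qed.

Lemma crt_sol_ge_quotient y : crt_sol M rt L k Gbar y -> N / M k <= y.
Proof.
  intros [Hy0 Hy]. destruct (Z_lt_le_dec y (N / M k)) as [Hlt |]; [exfalso | lia].
  pose proof (M_pos k k_lt).
  assert (Hmul : (lcm_upto M L | (N / M k - y) * M k)).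
  { apply lcm_upto_least. intros j Hj.
    destruct (Nat.eq_dec j k) as [-> | Hjk]; [apply Z.divide_factor_r |].
    destruct (moduli_factor j Hj) as (_ & _ & HMk & HMj).
    assert (Hd : (Gik M k j | N / M k - y)).
    { apply divide_sub_of_mod_eq. rewrite Hy by auto.
      now apply (proj2 quotient_crt_sol). }
    destruct Hd as [s Hs]. rewrite Hs, HMj, HMk. exists (s * Gki M k j). ring. }
  apply Z.divide_pos_le in Hmul; [| nia].
  pose proof (Z.mul_div_le N (M k)). nia.
Qed.

Lemma quotient_is_nk_hat : is_nk_hat M rt L k Gbar (N / M k).
Proof. split; [apply quotient_crt_sol | apply crt_sol_ge_quotient]. Qed.

Lemma is_nk_hat_quotient y : is_nk_hat M rt L k Gbar y -> y = N / M k.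
Proof.
  intros [Hy Hmin]. apply Z.le_antisymm.
  - apply Hmin, quotient_crt_sol.
  - now apply crt_sol_ge_quotient.
Qed.

Lemma nhat_quotient i : (i < L)%nat -> nhat M rt k (N / M k) i = N / M i.
Proof.
  intros Hi. unfold nhat. destruct (Nat.eqb_spec i k) as [-> | Hik]; [reflexivity |].
  destruct (moduli_factor i Hi) as (_ & HB & _).
  rewrite qhat_exact by auto.
  replace (N / M k * Gki M k i - (N / M k * Gki M k i - N / M i * Gik M k i))
    with (N / M i * Gik M k i) by ring.
  apply Z.div_mul; lia.
Qed.

End SingleStage.

Theorem corollary1 (L : nat) (M : nat -> Z) (N : Z) (rt : nat -> Z) (tau : R)
  (k : nat) (Gbar : nat -> Z) :
  (2 <= L)%nat ->
  (forall i, (i < L)%nat -> (0 < M i)%Z) ->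
  (forall i j, (i < L)%nat -> (j < L)%nat -> i <> j -> M i <> M j) ->
  (0 <= N < lcm_upto M L)%Z ->
  (forall i, (i < L)%nat -> (0 <= rt i <= M i - 1)%Z) ->
  (forall i, (i < L)%nat -> (Rabs (IZR (rt i - N mod M i)) <= tau)%R) ->
  (tau < IZR (maxmingcd M L) / 4)%R ->
  (k < L)%nat ->
  mingcd M L k = maxmingcd M L ->
  is_inverse_family M L k Gbar ->
  (exists y, is_nk_hat M rt L k Gbar y) /\
  (forall y, is_nk_hat M rt L k Gbar y ->
     forall i, (i < L)%nat -> nhat M rt k y i = ((N - N mod M i) / M i)%Z).
Proof.
  intros _ Hpos _ HN _ Herr Htau Hk Hkmax Hinv.
  rewrite <- Hkmax in Htau.
  split.
  - exists (N / M k). now apply (quotient_is_nk_hat L M N rt tau k Gbar).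
  - intros y Hy i Hi.
    rewrite (is_nk_hat_quotient L M N rt tau k Gbar Hpos HN Herr Hk Htau Hinv y Hy).
    rewrite div_sub_mod by auto.
    now apply (nhat_quotient L M N rt tau k).
Qed.
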